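(* Let $N>0$, $m>0$, $F>0$, $\alpha>0$, $w>0$, $\tau\in(0,1)$, $g\geq 0$, $L_g\geq 0$, and define \[ L=\frac{N\left[(1-\tau)(mL_g+\alpha F)+(mg+F)mN\right]}{\alpha+(Nm-\alpha)\tau},\qquad q=\frac{(1-\tau)(L+L_g-\alpha g)}{\left(Nm+\alpha(1-\tau)\right)(L+L_g)}, \] \[ p=\frac{L+L_g}{L+L_g-\alpha g}\left(mw+\frac{\alpha(1-\tau)w}{N}\right),\qquad \Pi=\left((L+L_g)q+g\right)(p-mw)-Fw . \] Assume $Nm>\alpha$. If \[ F\leq \frac{\alpha\left((L+L_g)q+g\right)L}{(L+L_g)N}, \] then $\Pi\geq 0$.
   Context: These are the symmetric-equilibrium quantities of a monopolistic-competition general equilibrium model: $N$ is the measure of firms, $m$ and $F$ the marginal and fixed labor inputs, $\alpha$ the CARA utility parameter, $w$ the nominal wage, $\tau$ the income tax rate, $g$ the government purchase of each variety, $L_g$ government employment, $L$ private employment, $q$ per-capita consumption of each variety, $p$ the common price, and $\Pi$ the profit of each firm. *)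

From mathcomp Require Import all_boot all_order all_algebra.

(* The closed form of L is the labour-market clearing condition
   L = N (m y + F), where y = (L + L_g) q + g is the output of a firm.
   Eliminating F with it, both the profit Pi and the slack of the assumed
   bound on F become positive multiples of the same quantity
   K = S (X - L) + alpha g L, where S = L + L_g and X = D y with
   D = N m + alpha (1 - tau); hence the bound forces Pi >= 0. *)
From mathcomp Require Import all_boot all_order all_algebra.
From mathcomp Require Import ring lra.
Import Order.TTheory GRing.Theory Num.Theory.
Local Open Scope ring_scope.

Section Identities.

Context {R : fieldType} {N m F alpha w tau g Lg L : R}.

Local Notation S := (L + Lg).
Local Notation E := (alpha + (N * m - alpha) * tau).
Local Notation D := (N * m + alpha * (1 - tau)).
Local Notation X := ((1 - tau) * S + g * N * m).
Local Notation K := (S * (X - L) + alpha * L * g).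

Lemma output_eq : S != 0 -> D != 0 ->
  S * ((1 - tau) * (S - alpha * g) / (D * S)) + g = X / D.
Proof. by move=> S0 D0; field; rewrite S0 D0. Qed.

Lemma markup_eq : N != 0 -> S - alpha * g != 0 ->
  S / (S - alpha * g) * (m * w + alpha * (1 - tau) * w / N) - m * w
  = alpha * w * X / (N * (S - alpha * g)).
Proof. by move=> N0 Sg0; field; rewrite N0 Sg0. Qed.

Lemma labor_market_clearing :
  L * E = N * ((1 - tau) * (m * Lg + alpha * F) + (m * g + F) * m * N) ->
  L * D = N * (m * X + F * D).
Proof.
move=> closed_form; apply/eqP; rewrite -subr_eq0.
have -> : L * D - N * (m * X + F * D)
        = L * E - N * ((1 - tau) * (m * Lg + alpha * F) + (m * g + F) * m * N).
  by ring.
by rewrite closed_form subrr.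
Qed.

Hypothesis clearing : L * D = N * (m * X + F * D).
Hypotheses (N0 : N != 0) (D0 : D != 0).

Lemma fixed_cost_eq : F = L / N - m * X / D.
Proof.
apply/eqP; rewrite -subr_eq0.
have -> : F - (L / N - m * X / D) = (N * (m * X + F * D) - L * D) / (N * D).
  by field; rewrite N0 D0.
by rewrite clearing subrr mul0r.
Qed.

Lemma profit_eq : S - alpha * g != 0 ->
  X / D * (alpha * w * X / (N * (S - alpha * g))) - F * w
  = w / (N * (S - alpha * g)) * K.
Proof. by move=> Sg0; rewrite fixed_cost_eq; field; rewrite N0 D0 Sg0. Qed.

Lemma slack_eq : m != 0 -> S != 0 ->
  alpha * (X / D) * L / (S * N) - F = m / (D * S) * K.
Proof. by move=> m0 S0; rewrite fixed_cost_eq; field; rewrite N0 D0 S0. Qed.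

End Identities.

Lemma labor_gt {R : realFieldType} {N m F alpha tau g Lg L : R} :
  0 < N -> 0 < m -> 0 < F -> 0 < alpha -> 0 < tau -> tau < 1 ->
  0 <= g -> 0 <= Lg -> alpha < N * m ->
  L * (alpha + (N * m - alpha) * tau)
    = N * ((1 - tau) * (m * Lg + alpha * F) + (m * g + F) * m * N) ->
  N * m * g < L.
Proof.
move=> N0 m0 F0 a0 t0 t1 g0 Lg0 aNm closed_form.
set E := alpha + (N * m - alpha) * tau in closed_form *.
have E0 : 0 < E by rewrite /E; nra.
have ENm : E < N * m by rewrite /E; nra.
have -> : (N * m * g < L) = (0 < (L - N * m * g) * E).
  by rewrite pmulr_lgt0 // subr_gt0.
have -> : (L - N * m * g) * E = N * m * (1 - tau) * Lg
          + N * m * g * (N * m - E) + N * F * (N * m + alpha * (1 - tau)).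
  by rewrite mulrBl closed_form /E; ring.
have Nm0 : 0 < N * m by exact: mulr_gt0.
have : 0 <= N * m * (1 - tau) * Lg.
  by apply: mulr_ge0 => //; apply: mulr_ge0; [exact: ltW | lra].
have : 0 <= N * m * g * (N * m - E).
  by apply: mulr_ge0; [apply: mulr_ge0 => //; exact: ltW | lra].
have : 0 < N * F * (N * m + alpha * (1 - tau)) by rewrite !mulr_gt0 //; nra.
lra.
Qed.

Theorem proposition4 (R : realFieldType) (N m F alpha w tau g Lg : R) :
  0 < N -> 0 < m -> 0 < F -> 0 < alpha -> 0 < w ->
  0 < tau -> tau < 1 -> 0 <= g -> 0 <= Lg ->
  alpha < N * m ->
  let L := N * ((1 - tau) * (m * Lg + alpha * F) + (m * g + F) * m * N)
           / (alpha + (N * m - alpha) * tau) in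
  let q := (1 - tau) * (L + Lg - alpha * g)
           / ((N * m + alpha * (1 - tau)) * (L + Lg)) in
  let p := (L + Lg) / (L + Lg - alpha * g)
           * (m * w + alpha * (1 - tau) * w / N) in
  let Pi := ((L + Lg) * q + g) * (p - m * w) - F * w in
  F <= alpha * ((L + Lg) * q + g) * L / ((L + Lg) * N) ->
  0 <= Pi.
Proof.
move=> N0 m0 F0 a0 w0 t0 t1 g0 Lg0 aNm L q p Pi bound.
have E0 : 0 < alpha + (N * m - alpha) * tau by nra.
have D0 : 0 < N * m + alpha * (1 - tau) by nra.
have closed_form : L * (alpha + (N * m - alpha) * tau)
    = N * ((1 - tau) * (m * Lg + alpha * F) + (m * g + F) * m * N).
  by rewrite /L divfK ?lt0r_neq0.
have clearing := labor_market_clearing closed_form.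
have NmgL := labor_gt N0 m0 F0 a0 t0 t1 g0 Lg0 aNm closed_form.
have Sg0 : 0 < L + Lg - alpha * g.
  have : alpha * g <= N * m * g by rewrite ler_wpM2r // ltW.
  lra.
have S0 : 0 < L + Lg by nra.
move: bound; rewrite /Pi /p /q output_eq ?markup_eq ?lt0r_neq0 //.
rewrite -subr_ge0 slack_eq ?profit_eq ?lt0r_neq0 //.
by rewrite !pmulr_rge0 ?divr_gt0 ?mulr_gt0.
Qed.
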